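(* Let $m\ge3$. The matrices $\mathcal{M}^{t,p}_{i,j}$ ($(i,j,t,p)\in\mathcal{I}_{(m,m)}$), $\mathcal{R}^{t,p}_{i,j}$ ($(i,j,t,p)\in\mathcal{I}_{(m,m+1)}$), $\mathcal{L}^{t,p}_{i,j}$ ($(i,j,t,p)\in\mathcal{I}_{(m+1,m)}$) and $\mathcal{F}^{t,p}_{i,j}$ ($(i,j,t,p)\in\mathcal{I}_{(m+1,m+1)}$) form a basis of the Terwilliger algebra $T=T(x_0)$ of $2.O_{m+1}$.
   Context: $S=\{1,\dots,2m+1\}$, $X=\binom{S}{m}\cup\binom{S}{m+1}$; the doubled Odd graph $2.O_{m+1}$ has vertex set $X$, two vertices adjacent iff one is a proper subset of the other, with distance $\partial$. $x_0=\{1,\dots,m\}$. $T$ is the subalgebra of complex $X\times X$ matrices generated by the adjacency matrix $A_1$ and the diagonal matrices $E^*_i$ ($0\le i\le 2m+1$) with $(y,y)$-entry $1$ iff $\partial(x_0,y)=i$. For $y,z\subseteq S$, $\varrho(y,z)=(|x_0\cap y|,|x_0\cap z|,|y\cap z|,|x_0\cap y\cap z|)$; for $a,b\in\{m,m+1\}$, $\mathcal{I}_{(a,b)}=\{\varrho(y,z):y\in\binom{S}{a},z\in\binom{S}{b}\}$ and $X^{(i,j,t,p)}_{(a,b)}=\{(y,z)\in\binom{S}{a}\times\binom{S}{b}:\varrho(y,z)=(i,j,t,p)\}$. The matrices $\mathcal{M}^{t,p}_{i,j}$, $\mathcal{R}^{t,p}_{i,j}$, $\mathcal{L}^{t,p}_{i,j}$,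 $\mathcal{F}^{t,p}_{i,j}$ are the $X\times X$ $0/1$ matrices whose $(y,z)$-entry is $1$ iff $(y,z)$ lies in $X^{(i,j,t,p)}_{(m,m)}$, $X^{(i,j,t,p)}_{(m,m+1)}$, $X^{(i,j,t,p)}_{(m+1,m)}$, $X^{(i,j,t,p)}_{(m+1,m+1)}$ respectively. *)

From mathcomp Require Import all_boot all_order all_algebra.

Import GRing.Theory Num.Theory.
Local Open Scope ring_scope.

(* Ground set S = {1,...,2m+1} is modelled by 'I_(2m+1) (k stands for k+1). *)
Notation Sset m := {set 'I_(2 * m + 1)}.

(* Vertices of the doubled Odd graph 2.O_{m+1}: m- and (m+1)-subsets of S. *)
Definition inX (m : nat) (y : Sset m) : bool := (#|y| == m)%N || (#|y| == m.+1)%N.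
Definition Xt (m : nat) : finType := {y : Sset m | inX m y}.

Definition adjb (m : nat) (y z : Sset m) : bool := (y \proper z) || (z \proper y).

Fixpoint connk (m k : nat) (y z : Sset m) : bool :=
  if k is k'.+1 then [exists w : Sset m, inX m w && adjb m y w && connk m k' w z]
  else y == z.

(* graph distance: least k with a walk of length k (graph is connected,
   any distance is < 2^(2m+1)) *)
Definition dist (m : nat) (y z : Sset m) : nat :=
  find (fun k => connk m k y z) (iota 0 (2 ^ (2 * m + 1))).

Definition x0 (m : nat) : Sset m := [set i : 'I_(2 * m + 1) | (i < m)%N].

Section Mats.
Variable C : numClosedFieldType.

Definition mxX (m : nat) (f : Xt m -> Xt m -> C) : 'M[C]_(#|Xt m|) :=
  \matrix_(i, j) f (enum_val i) (enum_val j).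

Definition A1 (m : nat) : 'M[C]_(#|Xt m|) :=
  mxX m (fun y z => (adjb m (val y) (val z))%:R).

Definition Estar (m i : nat) : 'M[C]_(#|Xt m|) :=
  mxX m (fun y z => ((y == z) && (dist m (x0 m) (val y) == i)%N)%:R).

Definition genmx (m : nat) (g : option 'I_(2 * m + 2)) : 'M[C]_(#|Xt m|) :=
  if g is Some i then Estar m i else A1 m.

Definition wordmx (m : nat) (w : seq (option 'I_(2 * m + 2))) : 'M[C]_(#|Xt m|) :=
  foldr (fun g M => genmx m g *m M) 1%:M w.

(* membership in the Terwilliger algebra T = subalgebra generated by A_1 and
   the E*_i : linear combinations of products of generators (empty product = I) *)
Definition inT (m : nat) (M : 'M[C]_(#|Xt m|)) : Prop :=
  exists (s : seq (seq (option 'I_(2 * m + 2)))) (c : seq C),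
    M = \sum_(k < size s) c`_k *: wordmx m (nth [::] s k).

Definition rho (m : nat) (y z : Sset m) : nat * nat * nat * nat :=
  (#|x0 m :&: y|, #|x0 m :&: z|, #|y :&: z|, #|x0 m :&: y :&: z|)%N.

Definition quads (n : nat) : seq (nat * nat * nat * nat) :=
  flatten [seq flatten [seq [seq (a, b, c, d) | c <- iota 0 n, d <- iota 0 n]
                       | b <- iota 0 n] | a <- iota 0 n].

Definition realized (m a b : nat) (q : nat * nat * nat * nat) : bool :=
  [exists y : Sset m, exists z : Sset m,
     [&& #|y| == a, #|z| == b & rho m y z == q]%N].

(* 0/1 matrix of X^{q}_{(a,b)} : M (a=b=m), R (m,m+1), L (m+1,m), F (m+1,m+1) *)
Definition Imx (m a b : nat) (q : nat * nat * nat * nat) : 'M[C]_(#|Xt m|) :=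
  mxX m (fun y z => ([&& #|val y| == a, #|val z| == b & rho m (val y) (val z) == q]%N)%:R).

Definition claimed_basis (m : nat) : seq 'M[C]_(#|Xt m|) :=
  flatten [seq [seq Imx m ab.1 ab.2 q | q <- quads (2 * m + 2) & realized m ab.1 ab.2 q]
          | ab <- [:: (m, m); (m, m.+1); (m.+1, m); (m.+1, m.+1)]].

End Mats.

From mathcomp Require Import all_boot all_order all_algebra.
From mathcomp Require Import zify.
Set Implicit Arguments.
Unset Strict Implicit.
Unset Printing Implicit Defensive.
Import GRing.Theory Num.Theory.

(* The stabiliser K of x0 in Sym(S) acts on X x X, and two pairs (y, z),
   (y', z') lie in the same K-orbit iff |y|, |z| and rho agree: these numbers
   fix the Venn diagram of x0, y, z. The matrices of the statement are the
   orbit indicators, hence independent. A_1 and the E*_i commute with K, so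
   every element of T is constant on orbits and lies in their span.
   Conversely, multiplying by E*_{dist(x0,y)} A_1 moves y one step towards z;
   by induction on |y :\: z| + |z :\: y| this gives for each orbit a
   nonnegative element of T positive on it and supported on orbits where y and
   z share at least as many points inside and outside x0. Descending induction
   on |y :&: z| then isolates every orbit indicator in T. *)

Section SetCounting.
Variable T : finType.
Implicit Types (A B S y z w : {set T}) (e : T) (b : bool).

Lemma card_setU1I e A y : e \notin y -> #|A :&: (e |: y)| = (e \in A) + #|A :&: y|.
Proof.
move=> ey; rewrite (cardsD1 e) !inE eqxx /= andbT; congr (_ + _).
apply: eq_card => x; rewrite !inE; case: eqP => [->|] //=.
by rewrite (negbTE ey) andbF.
Qed.

Lemma card_setD1I e A y : e \in y -> #|A :&: y| = (e \in A) + #|A :&: (y :\ e)|.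
Proof. by move=> ey; rewrite (cardsD1 e) !inE ey andbT setIDA. Qed.

Lemma cardCI A y : #|~: A :&: y| = #|y| - #|A :&: y|.
Proof. by have := cardsID A y; rewrite setDE setIC (setIC y); lia. Qed.

Lemma cardI_split A y z : #|y :&: z| = #|A :&: y :&: z| + #|~: A :&: y :&: z|.
Proof. by rewrite -!setIA cardCI; have := subset_leq_card (subsetIr A (y :&: z)); lia. Qed.

Lemma subset_cardI A y : (A \subset y) = (#|A :&: y| == #|A|).
Proof.
apply/idP/eqP => [/setIidPl -> // | h].
by apply/setIidPl/eqP; rewrite eqEcard subsetIl h leqnn.
Qed.

Lemma leq_cardI_subset B A y w : B \subset A -> y \subset w ->
  #|B :&: w| <= #|B :&: y| + (#|A :&: w| - #|A :&: y|).
Proof.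
move=> sBA syw.
have sub : B :&: w \subset (B :&: y) :|: ((A :&: w) :\: (A :&: y)).
  apply/subsetP => x; rewrite !inE => /andP[xB xw].
  by rewrite xB xw (subsetP sBA x xB) /=; case: (x \in y).
have AyAw : A :&: w :&: (A :&: y) = A :&: y.
  by apply/setIidPr/subsetP => x; rewrite !inE => /andP[-> /(subsetP syw) ->].
have := cardsID (A :&: y) (A :&: w); rewrite AyAw => cardD.
apply: leq_trans (subset_leq_card sub) _; apply: leq_trans (leq_card_setU _ _) _; lia.
Qed.

Lemma ex_in_setD A y z : #|A :&: y :&: z| < #|A :&: z| ->
  exists e, [/\ e \in A, e \in z & e \notin y].
Proof.
have := cardsID y (A :&: z); rewrite setIAC => cardD lt.
have : 0 < #|A :&: z :\: y| by lia.
rewrite card_gt0 => /set0Pn[e]; rewrite !inE => /andP[ey /andP[eA ez]].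
by exists e; rewrite eA ez ey.
Qed.

Lemma notin_setD A y z e : #|A :&: z| <= #|A :&: y :&: z| ->
  e \in z -> e \notin y -> e \notin A.
Proof.
move=> le ez ey; apply/negP => eA.
have := cardsID y (A :&: z); rewrite setIAC => cardD.
have : 0 < #|A :&: z :\: y| by rewrite card_gt0; apply/set0Pn; exists e; rewrite !inE ey eA ez.
lia.
Qed.

Lemma ex_in_setD_pref A y z : #|y :&: z| < #|z| ->
  exists e, [/\ e \in z, e \notin y & (e \in A) = (#|A :&: y :&: z| < #|A :&: z|)].
Proof.
move=> ltyz; have [ltA|leA] := ltnP #|A :&: y :&: z| #|A :&: z|.
  by have [e [eA ez ey]] := ex_in_setD ltA; exists e; rewrite eA.
have [|e [_ ez ey]] := @ex_in_setD [set: T] y z; first by rewrite !setTI.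
by exists e; split=> //; apply/negbTE/(notin_setD leA).
Qed.

Lemma leq_cardI_setU1 A e y0 z0 y w z : e \notin y0 -> e \in z0 -> y \subset w ->
  #|A :&: w| = #|A :&: (e |: y0)| -> #|A :&: y| = #|A :&: y0| ->
  #|A :&: (e |: y0) :&: z0| <= #|A :&: w :&: z| ->
  #|A :&: y0 :&: z0| <= #|A :&: y :&: z|.
Proof.
move=> ey0 ez0 syw.
have := leq_cardI_subset (subsetIl A z) syw; rewrite -!setIA !(setIC z) !setIA.
have := card_setU1I A ey0; have := card_setU1I (A :&: z0) ey0.
rewrite inE ez0 andbT setIAC [A :&: z0 :&: _]setIAC.
lia.
Qed.

Lemma leq_cardI_setD1 A e y0 z0 y w z : e \notin z0 -> w \subset y ->
  #|A :&: (y0 :\ e) :&: z0| <= #|A :&: w :&: z| ->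
  #|A :&: y0 :&: z0| <= #|A :&: y :&: z|.
Proof.
move=> ez0 swy; have -> : A :&: (y0 :\ e) :&: z0 = A :&: y0 :&: z0.
  by apply/setP => x; rewrite !inE; case: eqP => // ->; rewrite (negbTE ez0) !andbF.
by move/leq_trans; apply; apply/subset_leq_card/setSI/setIS.
Qed.

Definition setCif b A := if b then A else ~: A.

Lemma card_setCifI b A A' S S' : #|S| = #|S'| -> #|A :&: S| = #|A' :&: S'| ->
  #|setCif b A :&: S| = #|setCif b A' :&: S'|.
Proof.
case: b => //= eS eAS; rewrite ![~: _ :&: _]setIC -!setDE.
by have := cardsID A S; have := cardsID A' S'; rewrite ![_ :&: A]setIC ![_ :&: A']setIC; lia.
Qed.

Lemma venn3_fiber A B S b1 b2 b3 :
  [set e | (e \in A, e \in B, e \in S) == (b1, b2, b3)] =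
  setCif b1 A :&: (setCif b2 B :&: setCif b3 S).
Proof.
apply/setP => e; rewrite !inE !xpair_eqE.
by case: b1; case: b2; case: b3; rewrite /setCif ?inE ?eqb_id ?eqbF_neg -andbA.
Qed.

(* The seven cardinalities of the Venn diagram of three sets determine its
   eight cells. *)
Lemma card_venn3 A1 B1 S1 A2 B2 S2 :
  #|A1| = #|A2| -> #|B1| = #|B2| -> #|S1| = #|S2| ->
  #|A1 :&: B1| = #|A2 :&: B2| -> #|A1 :&: S1| = #|A2 :&: S2| ->
  #|B1 :&: S1| = #|B2 :&: S2| -> #|A1 :&: B1 :&: S1| = #|A2 :&: B2 :&: S2| ->
  forall b1 b2 b3,
  #|setCif b1 A1 :&: (setCif b2 B1 :&: setCif b3 S1)| =
  #|setCif b1 A2 :&: (setCif b2 B2 :&: setCif b3 S2)|.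
Proof.
move=> eA eB eS eAB eAS eBS eABS b1 b2 b3.
have eS3 : #|setCif b3 S1| = #|setCif b3 S2|.
  by rewrite -(setIT (setCif b3 S1)) -(setIT (setCif b3 S2)); apply: card_setCifI; rewrite ?setIT.
have eS3B : #|setCif b3 S1 :&: B1| = #|setCif b3 S2 :&: B2|.
  by apply: card_setCifI; rewrite // setIC eBS setIC.
have eS3A : #|setCif b3 S1 :&: A1| = #|setCif b3 S2 :&: A2|.
  by apply: card_setCifI; rewrite // setIC eAS setIC.
have eS3BA : #|setCif b3 S1 :&: (B1 :&: A1)| = #|setCif b3 S2 :&: (B2 :&: A2)|.
  apply: card_setCifI; first by rewrite setIC eAB setIC.
  have reord (X Y Z : {set T}) : Z :&: (Y :&: X) = X :&: Y :&: Z.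
    by rewrite setIC (setIC Y).
  by rewrite !reord.
have eB2S3 : #|setCif b2 B1 :&: setCif b3 S1| = #|setCif b2 B2 :&: setCif b3 S2|.
  by apply: card_setCifI; rewrite // setIC eS3B setIC.
have eAB2S3 : #|A1 :&: (setCif b2 B1 :&: setCif b3 S1)| =
              #|A2 :&: (setCif b2 B2 :&: setCif b3 S2)|.
  rewrite (setICA A1) (setICA A2); apply: card_setCifI.
    by rewrite (setIC A1) (setIC A2).
  by rewrite (setIC A1) (setIC A2) (setICA B1) (setICA B2).
by apply: card_setCifI.
Qed.

End SetCounting.

(* Two maps with equinumerous fibres differ by a permutation: match the
   [i]-th element of a fibre of [f] with the [i]-th element of the
   corresponding fibre of [f']. *)
Lemma fibers_perm (T : finType) (K : eqType) (f f' : T -> K) :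
  (forall c, #|[set e | f e == c]| = #|[set e | f' e == c]|) ->
  exists g : T -> T, injective g /\ forall e, f (g e) = f' e.
Proof.
move=> hc; pose F c := enum [set e | f e == c]; pose F' c := enum [set e | f' e == c].
have idx_lt e : index e (F' (f' e)) < size (F (f' e)).
  by rewrite /F /F' -cardE hc cardE index_mem mem_enum inE.
pose g e := nth e (F (f' e)) (index e (F' (f' e))).
have fg e : f (g e) = f' e.
  by have := mem_nth e (idx_lt e); rewrite mem_enum inE => /eqP.
exists g; split=> // e1 e2 eg.
have ef : f' e1 = f' e2 by rewrite -fg eg fg.
have in_F' e : e \in F' (f' e) by rewrite mem_enum inE.
have lt1 := idx_lt e1; have in1 := in_F' e1; rewrite ef in lt1 in1.
move: eg; rewrite /g ef (set_nth_default e2 e1 lt1) => /eqP.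
rewrite nth_uniq ?enum_uniq ?idx_lt // => /eqP eidx.
by rewrite -(nth_index e1 in1) eidx nth_index.
Qed.

Section Depth.
Variable m : nat.
Local Notation S := ('I_(2 * m + 1)).
Implicit Types y z w : {set S}.

Lemma card_x0 : #|x0 m| = m.
Proof.
have le_m : m <= 2 * m + 1 by lia.
have -> : x0 m = [set widen_ord le_m j | j : 'I_m].
  apply/setP => i; rewrite !inE; apply/idP/imsetP => [lt|[j _ ->]] /=; last exact: ltn_ord.
  by exists (Ordinal lt) => //; apply: val_inj.
by rewrite card_imset ?card_ord // => a b /(congr1 val) /= /val_inj.
Qed.

Lemma leq_cardI_x0 y : #|x0 m :&: y| <= m.
Proof. by apply: leq_trans (subset_leq_card (subsetIl _ _)) _; rewrite card_x0. Qed.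

Lemma inXP y : inX m y -> #|y| = m \/ #|y| = m.+1.
Proof. by case/orP=> /eqP; auto. Qed.

(* The distance from [x0] in closed form: each missing point of [x0] costs
   two steps, and a vertex of size [m + 1] one more. *)
Definition depth y : nat := 2 * (m - #|x0 m :&: y|) + (#|y| - m).

Lemma depth_x0 : depth (x0 m) = 0.
Proof. by rewrite /depth setIid card_x0 subnn. Qed.

Lemma depth_lt y : inX m y -> depth y < 2 * m + 2.
Proof. by move=> hy; rewrite /depth; have := leq_cardI_x0 y; case: (inXP hy) => ->; lia. Qed.

Lemma depth_adj y w : inX m y -> inX m w -> adjb m y w -> depth w <= (depth y).+1.
Proof.
move=> /inXP hy /inXP hw /orP[] yw; rewrite /depth; have := proper_card yw;
  have := leq_cardI_x0 y; have := leq_cardI_x0 w.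
  have : #|x0 m :&: y| <= #|x0 m :&: w| by rewrite subset_leq_card ?setIS ?proper_sub.
  lia.
have := leq_cardI_subset (subsetT (x0 m)) (proper_sub yw); rewrite !setTI.
lia.
Qed.

Lemma connk_depth k y z : inX m y -> connk m k y z -> depth z <= depth y + k.
Proof.
elim: k y => [|k IH] y hy /=; first by move=> /eqP ->; rewrite addn0.
case/existsP=> w /andP[/andP[hw adj] c].
by have := IH w hw c; have := depth_adj hy hw adj; lia.
Qed.

Lemma connk_rcons k y w z : connk m k y w -> inX m z -> adjb m w z -> connk m k.+1 y z.
Proof.
elim: k y => [|k IH] y /=.
  by move=> /eqP -> hz adj; apply/existsP; exists z; rewrite hz adj eqxx.
case/existsP=> u /andP[/andP[hu adj] c] hz adj'.
by apply/existsP; exists u; rewrite hu adj; exact: IH c hz adj'.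
Qed.

(* A geodesic from [x0]: while [y] misses a point of [x0] at size [m], add
   it; at size [m + 1], drop a point outside [x0]. *)
Lemma connk_x0_depth k y : inX m y -> depth y = k -> connk m k (x0 m) y.
Proof.
elim: k y => [|k IH] y hy hd.
  have hx := leq_cardI_x0 y.
  have x0y : x0 m \subset y.
    by rewrite subset_cardI card_x0; apply/eqP; move: hd; rewrite /depth; case: (inXP hy); lia.
  rewrite /= eqEcard x0y card_x0 /=.
  by move: hd; rewrite /depth; case: (inXP hy) => ->; lia.
have hx := leq_cardI_x0 y.
case: (inXP hy) => cy.
- have [e [_ ex ey]] : exists e, [/\ e \in [set: S], e \in x0 m & e \notin y].
    by apply: ex_in_setD; rewrite !setTI setIC card_x0; move: hd; rewrite /depth cy; lia.
  have he : inX m (e |: y) by rewrite /inX cardsU1 ey cy eqxx orbT.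
  apply: (connk_rcons (w := e |: y)) => //; last first.
    by rewrite /adjb properUr ?orbT // sub1set.
  apply: IH => //; move: hd; rewrite /depth cardsU1 ey cy card_setU1I // ex; lia.
- have [e [_ ey ex]] : exists e, [/\ e \in [set: S], e \in y & e \notin x0 m].
    by apply: ex_in_setD; rewrite !setTI cy; lia.
  have cyD : #|y :\ e| = m by have := cardsD1 e y; rewrite ey cy; lia.
  have he : inX m (y :\ e) by rewrite /inX cyD eqxx.
  apply: (connk_rcons (w := y :\ e)) => //; last by rewrite /adjb properD1 ?orbT.
  apply: IH => //; move: hd; rewrite /depth (card_setD1I (x0 m) ey) (negbTE ex) cyD cy.
  lia.
Qed.

Lemma dist_x0 y : inX m y -> dist m (x0 m) y = depth y.
Proof.
move=> hy; have hx0 : inX m (x0 m) by rewrite /inX card_x0 eqxx.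
rewrite /dist; set L := 2 ^ (2 * m + 1).
have lt_dL : depth y < L.
  by have := depth_lt hy; have := ltn_expl (2 * m + 1) (ltnSn 1); rewrite /L; lia.
rewrite -(subnKC (ltnW lt_dL)) iotaD find_cat.
have -> : has (fun k => connk m k (x0 m) y) (iota 0 (depth y)) = false.
  apply/hasPn => j; rewrite mem_iota /= => ltj; apply/negP => c.
  by have := connk_depth hx0 c; rewrite depth_x0; lia.
rewrite size_iota add0n (_ : L - depth y = (L - (depth y).+1).+1); last by lia.
by rewrite /= (connk_x0_depth hy) // addn0.
Qed.

End Depth.

Lemma flatten_map_uniq (A B : eqType) (s : seq A) (f : A -> seq B) (g : B -> A) :
  uniq s -> (forall x, x \in s -> uniq (f x)) -> (forall x y, y \in f x -> g y = x) ->
  uniq (flatten (map f s)).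
Proof.
elim: s => [|a s IH] //= /andP[nas us] uf gf.
rewrite cat_uniq uf ?mem_head // IH // => [|x xs]; last by apply: uf; rewrite inE xs orbT.
rewrite andbT; apply/hasPn => y /flatten_mapP[x xs yx]; apply/negP => ya.
by move: nas; rewrite -(gf _ _ ya) (gf _ _ yx) xs.
Qed.

Lemma uniq_quads n : uniq (quads n).
Proof.
apply: (flatten_map_uniq (g := fun q => q.1.1.1)) (iota_uniq 0 n) _ _; last first.
  by move=> a q /flatten_mapP[b _ /flatten_mapP[c _ /mapP[d _ ->]]].
move=> a _; apply: (flatten_map_uniq (g := fun q => q.1.1.2)) (iota_uniq 0 n) _ _; last first.
  by move=> b q /flatten_mapP[c _ /mapP[d _ ->]].
move=> b _; apply: (flatten_map_uniq (g := fun q => q.1.2)) (iota_uniq 0 n) _ _; last first.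
  by move=> c q /mapP[d _ ->].
by move=> c _; rewrite map_inj_uniq ?iota_uniq // => d1 d2 [].
Qed.

Lemma mem_quads n a b c d : a < n -> b < n -> c < n -> d < n -> (a, b, c, d) \in quads n.
Proof.
move=> ltan ltbn ltcn ltdn.
apply/flatten_mapP; exists a; first by rewrite mem_iota.
apply/flatten_mapP; exists b; first by rewrite mem_iota.
apply/flatten_mapP; exists c; first by rewrite mem_iota.
by apply/mapP; exists d; rewrite ?mem_iota.
Qed.

Section Keys.
Variable m : nat.
Local Notation X := (Xt m).
Local Notation S := ('I_(2 * m + 1)).

Definition keyT := ((nat * nat) * (nat * nat * nat * nat))%type.

Definition key (y z : X) : keyT := ((#|val y|, #|val z|), rho m (val y) (val z)).

Definition basis_keys : seq keyT :=
  flatten [seq [seq (ab, q) | q <- quads (2 * m + 2) & realized m ab.1 ab.2 q]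
          | ab <- [:: (m, m); (m, m.+1); (m.+1, m); (m.+1, m.+1)]].

Lemma cardXt (y : X) : #|val y| = m \/ #|val y| = m.+1.
Proof. exact: inXP (valP y). Qed.

Lemma card_set_lt (A : {set S}) : #|A| < 2 * m + 2.
Proof. by apply: leq_ltn_trans (max_card A) _; rewrite card_ord; lia. Qed.

Lemma uniq_basis_keys : uniq basis_keys.
Proof.
apply: (flatten_map_uniq (g := fun k => k.1)) => [||ab k /mapP[q _ ->] //].
  by rewrite /= !inE !xpair_eqE !eqxx (gtn_eqF (ltnSn m)) (ltn_eqF (ltnSn m)).
move=> ab _; rewrite map_inj_uniq => [|q1 q2 [] //].
exact/filter_uniq/uniq_quads.
Qed.

Lemma key_basis_keys (y z : X) : key y z \in basis_keys.
Proof.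
apply/flatten_mapP; exists (#|val y|, #|val z|).
  by case: (cardXt y) => ->; case: (cardXt z) => ->; rewrite !inE eqxx ?orbT.
apply/mapP; exists (rho m (val y) (val z)) => //; rewrite mem_filter mem_quads ?card_set_lt //.
by rewrite andbT; apply/existsP; exists (val y); apply/existsP; exists (val z); rewrite !eqxx.
Qed.

Lemma basis_keysP k : k \in basis_keys -> exists y z : X, key y z = k.
Proof.
case/flatten_mapP=> ab ab_pairs /mapP[q]; rewrite mem_filter => /andP[+ _] ->.
case/existsP=> y /existsP[z /and3P[/eqP cy /eqP cz /eqP yzq]].
have inXab : inX m y /\ inX m z.
  by rewrite /inX cy cz; move: ab_pairs; rewrite !inE => /or4P[] /eqP-> /=; rewrite !eqxx ?orbT.
exists (Sub y inXab.1), (Sub z inXab.2).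
by rewrite /key /= cy cz yzq; case: ab {ab_pairs inXab cy cz}.
Qed.

(* Equal keys mean equal Venn diagrams of [x0], [y], [z], so some permutation
   of [S] fixing [x0] carries one pair onto the other. *)
Lemma key_transport (y z y' z' : X) : key y z = key y' z' ->
  exists2 h : S -> S, injective h &
    [/\ h @^-1: x0 m = x0 m, h @^-1: val y = val y' & h @^-1: val z = val z'].
Proof.
rewrite /key /rho => -[cy cz cx0y cx0z cyz cx0yz].
pose f e := (e \in x0 m, e \in val y, e \in val z).
pose f' e := (e \in x0 m, e \in val y', e \in val z').
have [h [hinj fh]] : exists h, injective h /\ forall e, f (h e) = f' e.
  by apply: fibers_perm => -[[b1 b2] b3]; rewrite !venn3_fiber; apply: card_venn3.
exists h => //; split; apply/setP => e; have := fh e;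
  by rewrite /f /f' => -[E1 E2 E3]; rewrite in_set ?E1 ?E2 ?E3.
Qed.

Section PreimVertex.
Variable h : S -> S.
Hypothesis h_inj : injective h.
Hypothesis h_x0 : h @^-1: x0 m = x0 m.

Lemma inX_preim (w : X) : inX m (h @^-1: val w).
Proof. by rewrite /inX (card_preimset _ h_inj); exact: (valP w). Qed.

Definition preim_vertex (w : X) : X := Sub (h @^-1: val w) (inX_preim w).

Lemma key_preim_vertex y z : key (preim_vertex y) (preim_vertex z) = key y z.
Proof.
by rewrite /key /rho /preim_vertex /= -[in LHS]h_x0 -!preimsetI !(card_preimset _ h_inj).
Qed.

Lemma preim_vertex_bij : bijective preim_vertex.
Proof.
apply: injF_bij => y z /(congr1 val) /= /setP eyz; apply/val_inj/setP => e.
by have := eyz (invF h_inj e); rewrite !inE f_invF.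
Qed.

End PreimVertex.
End Keys.

Local Open Scope ring_scope.

Section TerwilligerAlgebra.
Variable C : numClosedFieldType.
Variable m : nat.
Local Notation X := (Xt m).
Local Notation MX := 'M[C]_(#|Xt m|).

Definition entry (M : MX) (y z : X) : C := M (enum_rank y) (enum_rank z).

Lemma entry_mxX f y z : entry (mxX C m f) y z = f y z.
Proof. by rewrite /entry /mxX mxE !enum_rankK. Qed.

Lemma entryP (M N : MX) : (forall y z, entry M y z = entry N y z) -> M = N.
Proof.
move=> eMN; apply/matrixP => i j; have := eMN (enum_val i) (enum_val j).
by rewrite /entry !enum_valK.
Qed.

Lemma entry_mul (M N : MX) y z : entry (M *m N) y z = \sum_w entry M y w * entry N w z.
Proof.
rewrite /entry mxE (reindex (@enum_rank X)) //.
by exists enum_val => x _; [rewrite enum_rankK | rewrite enum_valK].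
Qed.

Lemma entryD (M N : MX) y z : entry (M + N) y z = entry M y z + entry N y z.
Proof. by rewrite /entry mxE. Qed.

Lemma entryN (M : MX) y z : entry (- M) y z = - entry M y z.
Proof. by rewrite /entry mxE. Qed.

Lemma entryZ a (M : MX) y z : entry (a *: M) y z = a * entry M y z.
Proof. by rewrite /entry mxE. Qed.

Lemma entry0 y z : entry 0 y z = 0.
Proof. by rewrite /entry mxE. Qed.

Lemma entry1 y z : entry 1%:M y z = (y == z)%:R.
Proof. by rewrite /entry mxE (inj_eq enum_rank_inj). Qed.

Lemma entry_sum (I : finType) (F : I -> MX) y z :
  entry (\sum_i F i) y z = \sum_i entry (F i) y z.
Proof. by rewrite /entry summxE. Qed.

Lemma wordmx_cat w1 w2 : wordmx C m (w1 ++ w2) = wordmx C m w1 *m wordmx C m w2.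
Proof. by elim: w1 => [|g w IH] /=; rewrite ?mul1mx // IH mulmxA. Qed.

Lemma inT0 : inT C m 0.
Proof. by exists [::], [::]; rewrite big_ord0. Qed.

Lemma inT_word w : inT C m (wordmx C m w).
Proof. by exists [:: w], [:: 1]; rewrite big_ord1 scale1r. Qed.

Lemma inTD M N : inT C m M -> inT C m N -> inT C m (M + N).
Proof.
move=> [s1 [c1 ->]] [s2 [c2 ->]].
exists (s1 ++ s2), (mkseq (fun k => c1`_k) (size s1) ++ c2).
rewrite size_cat big_split_ord /=; congr (_ + _); apply: eq_bigr => i _.
  by rewrite nth_cat size_mkseq ltn_ord nth_mkseq // nth_cat ltn_ord.
by rewrite !nth_cat size_mkseq ltnNge leq_addr /= addKn.
Qed.

Lemma inTZ a M : inT C m M -> inT C m (a *: M).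
Proof.
move=> [s [c ->]]; exists s, (mkseq (fun k => a * c`_k) (size s)).
by rewrite scaler_sumr; apply: eq_bigr => i _; rewrite nth_mkseq // scalerA.
Qed.

Lemma inTB M N : inT C m M -> inT C m N -> inT C m (M - N).
Proof. by move=> TM TN; rewrite -scaleN1r; apply/inTD/inTZ. Qed.

Lemma inT_sum (I : finType) (F : I -> MX) :
  (forall i, inT C m (F i)) -> inT C m (\sum_i F i).
Proof. by move=> TF; apply: (big_ind (inT C m)) => //; [exact: inT0 | exact: inTD]. Qed.

Lemma inT_mul M N : inT C m M -> inT C m N -> inT C m (M *m N).
Proof.
move=> [s [c ->]] [s' [c' ->]]; rewrite mulmx_suml; apply: inT_sum => i.
rewrite -scalemxAl mulmx_sumr; apply/inTZ/inT_sum => j.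
by rewrite -scalemxAr -wordmx_cat; apply/inTZ/inT_word.
Qed.

Lemma inT_A1 : inT C m (A1 C m).
Proof. by have := inT_word [:: None]; rewrite /= mulmx1. Qed.

Lemma inT_Estar i : (i < 2 * m + 2)%N -> inT C m (Estar C m i).
Proof. by move=> lti; have := inT_word [:: Some (Ordinal lti)]; rewrite /= mulmx1. Qed.

End TerwilligerAlgebra.

Section OrbitMatrices.
Variable C : numClosedFieldType.
Variable m : nat.
Local Notation X := (Xt m).
Local Notation MX := 'M[C]_(#|Xt m|).

Definition orbit_mx (k : keyT) : MX := Imx C m k.1.1 k.1.2 k.2.

Lemma entry_orbit_mx k y z : entry (orbit_mx k) y z = (key y z == k)%:R.
Proof. by case: k => [[a b] q]; rewrite /orbit_mx /Imx entry_mxX /key !xpair_eqE andbA. Qed.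

Lemma claimed_basisE : claimed_basis C m = map orbit_mx (basis_keys m).
Proof.
rewrite /claimed_basis /basis_keys map_flatten -map_comp; congr flatten.
by apply: eq_map => ab /=; rewrite -map_comp.
Qed.

Lemma entry_A1 y z : entry (A1 C m) y z = (adjb m (val y) (val z))%:R.
Proof. exact: entry_mxX. Qed.

Lemma entry_Estar i y z : entry (Estar C m i) y z = ((y == z) && (depth (val y) == i))%:R.
Proof. by rewrite /Estar entry_mxX dist_x0 //; apply: valP. Qed.

Lemma entry_EstarM i (M : MX) y z :
  entry (Estar C m i *m M) y z = (depth (val y) == i)%:R * entry M y z.
Proof.
rewrite entry_mul (bigD1 y) //= big1 ?addr0 => [|w wy]; first by rewrite entry_Estar eqxx.
by rewrite entry_Estar eq_sym (negbTE wy) mul0r.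
Qed.

Definition key_invariant (M : MX) :=
  forall y z y' z', key y z = key y' z' -> entry M y z = entry M y' z'.

Lemma key_invariantD M N : key_invariant M -> key_invariant N -> key_invariant (M + N).
Proof. by move=> iM iN y z y' z' e; rewrite !entryD (iM _ _ _ _ e) (iN _ _ _ _ e). Qed.

Lemma key_invariantZ a M : key_invariant M -> key_invariant (a *: M).
Proof. by move=> iM y z y' z' e; rewrite !entryZ (iM _ _ _ _ e). Qed.

Lemma key_invariant_sum (I : finType) (F : I -> MX) :
  (forall i, key_invariant (F i)) -> key_invariant (\sum_i F i).
Proof.
move=> iF; apply: (big_ind key_invariant) => //; last exact: key_invariantD.
by move=> y z y' z' _; rewrite !entry0.
Qed.

Lemma key_invariant_orbit_mx k : key_invariant (orbit_mx k).
Proof. by move=> y z y' z' e; rewrite !entry_orbit_mx e. Qed.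

Lemma eq_vertexE (y z : X) :
  (y == z) = [&& #|val y :&: val z| == #|val y| & #|val y :&: val z| == #|val z|].
Proof. by rewrite -val_eqE /= eqEsubset !subset_cardI [val z :&: _]setIC. Qed.

Lemma key_invariant1 : key_invariant 1%:M.
Proof.
move=> y z y' z'; rewrite !entry1 !eq_vertexE /key /rho.
by case=> -> -> _ _ ->.
Qed.

Lemma key_invariant_A1 : key_invariant (A1 C m).
Proof.
move=> y z y' z'; rewrite !entry_A1 /key /rho /adjb !properEcard !subset_cardI.
by case=> -> -> _ _ yz _; rewrite ![val z :&: _]setIC ![val z' :&: _]setIC yz.
Qed.

Lemma key_invariant_Estar i : key_invariant (Estar C m i).
Proof.
move=> y z y' z'; rewrite !entry_Estar !eq_vertexE /key /rho /depth.
by case=> -> -> -> _ -> _.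
Qed.

Lemma key_invariant_mul M N : key_invariant M -> key_invariant N -> key_invariant (M *m N).
Proof.
move=> iM iN y z y' z' /key_transport[h h_inj [h_x0 hy hz]].
have <- : preim_vertex h_inj y = y' by apply: val_inj.
have <- : preim_vertex h_inj z = z' by apply: val_inj.
rewrite !entry_mul [RHS](reindex (preim_vertex h_inj)) /=; last first.
  exact/onW_bij/preim_vertex_bij.
apply: eq_bigr => w _.
by rewrite (iM _ _ _ _ (key_preim_vertex h_inj h_x0 y w))
           (iN _ _ _ _ (key_preim_vertex h_inj h_x0 w z)).
Qed.

Lemma key_invariant_inT M : inT C m M -> key_invariant M.
Proof.
case=> s [c ->]; apply: key_invariant_sum => i; apply: key_invariantZ.
elim: (nth [::] s i) => [|[j|] w IH] /=; first exact: key_invariant1.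
  by apply: key_invariant_mul IH; apply: key_invariant_Estar.
by apply: key_invariant_mul IH; apply: key_invariant_A1.
Qed.

Definition key_coef (M : MX) (k : keyT) : C :=
  if [pick p : X * X | key p.1 p.2 == k] is Some p then entry M p.1 p.2 else 0.

Lemma key_invariant_decomp M : key_invariant M ->
  M = \sum_(k <- basis_keys m) key_coef M k *: orbit_mx k.
Proof.
move=> iM; apply: entryP => y z; rewrite /entry summxE -/(entry _ y z).
rewrite (bigD1_seq (key y z)) ?key_basis_keys ?uniq_basis_keys //=.
rewrite big1_seq => [|k /andP[kyz _]].
  rewrite addr0 -/(entry _ y z) entryZ entry_orbit_mx eqxx mulr1 /key_coef.
  case: pickP => [p /eqP/iM -> // | /(_ (y, z))]; by rewrite /= eqxx.
by rewrite mxE -/(entry _ y z) entry_orbit_mx eq_sym (negbTE kyz) mulr0.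
Qed.

Lemma free_orbit_mx (ks : seq keyT) : uniq ks ->
  (forall k, k \in ks -> exists y z : X, key y z = k) -> free (map orbit_mx ks).
Proof.
move=> uks ks_key; suff: free (in_tuple (map orbit_mx ks)) by [].
apply/freeP => c c_eq0 i.
have lti : (i < size ks)%N by rewrite -(size_map orbit_mx); exact: ltn_ord.
pose k0 : keyT := ((0, 0), (0, 0, 0, 0))%N.
have [y [z yzi]] := ks_key _ (mem_nth k0 lti).
have entry_j (j : 'I_(size (map orbit_mx ks))) :
    entry (c j *: (map orbit_mx ks)`_j) y z = c j * (nth k0 ks i == nth k0 ks j)%:R.
  by rewrite entryZ (nth_map k0) ?entry_orbit_mx ?yzi // -(size_map orbit_mx).
have := congr1 (fun M => entry M y z) c_eq0; rewrite /= entry0 entry_sum.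
rewrite (bigD1 i) //= big1 => [|j ji]; rewrite entry_j; first by rewrite eqxx mulr1 addr0.
by rewrite nth_uniq -?(size_map orbit_mx) // (inj_eq val_inj) eq_sym (negbTE ji) mulr0.
Qed.

Lemma key_invariant_span M : key_invariant M -> M \in <<map orbit_mx (basis_keys m)>>%VS.
Proof.
move/key_invariant_decomp => ->; rewrite big_seq; apply: memv_suml => k kb.
exact/memvZ/memv_span/map_f.
Qed.

End OrbitMatrices.

Section Generation.
Variable C : numClosedFieldType.
Variable m : nat.
Local Notation X := (Xt m).
Local Notation MX := 'M[C]_(#|Xt m|).
Implicit Types (y z w : X) (P M : MX).

Lemma depth_eq y y' : depth (val y) = depth (val y') ->
  #|val y| = #|val y'| /\ #|x0 m :&: val y| = #|x0 m :&: val y'|.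
Proof.
rewrite /depth; have := leq_cardI_x0 (val y); have := leq_cardI_x0 (val y').
by case: (cardXt y) => ->; case: (cardXt y') => ->; lia.
Qed.

Lemma depth_eqC y y' : depth (val y) = depth (val y') ->
  #|~: x0 m :&: val y| = #|~: x0 m :&: val y'|.
Proof. by case/depth_eq=> cy cx0y; rewrite !cardCI cy cx0y. Qed.

Lemma depth_key y z y0 z0 : key y z = key y0 z0 -> depth (val y) = depth (val y0).
Proof. by rewrite /key /rho /depth => -[-> _ -> _ _ _]. Qed.

Definition dominates y z y0 z0 :=
  (#|x0 m :&: val y0 :&: val z0| <= #|x0 m :&: val y :&: val z|)%N &&
  (#|~: x0 m :&: val y0 :&: val z0| <= #|~: x0 m :&: val y :&: val z|)%N.

Lemma key_dominated y z y0 z0 :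
  depth (val y) = depth (val y0) -> depth (val z) = depth (val z0) ->
  dominates y z y0 z0 -> (#|val y :&: val z| <= #|val y0 :&: val z0|)%N ->
  key y z = key y0 z0.
Proof.
move=> /depth_eq[cy cx0y] /depth_eq[cz cx0z] /andP[dom_in dom_out] le_yz.
have := cardI_split (x0 m) (val y) (val z); have := cardI_split (x0 m) (val y0) (val z0).
move=> split0 split.
have eq_in : #|x0 m :&: val y :&: val z| = #|x0 m :&: val y0 :&: val z0| by lia.
have eq_yz : #|val y :&: val z| = #|val y0 :&: val z0| by lia.
by rewrite /key /rho cy cz cx0y cx0z eq_in eq_yz.
Qed.

Definition witness P y0 z0 :=
  [/\ inT C m P, forall y z, 0 <= entry P y z,
      forall y z, key y z = key y0 z0 -> 0 < entry P y z &
      forall y z, entry P y z != 0 ->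
        [/\ depth (val y) = depth (val y0), depth (val z) = depth (val z0)
          & dominates y z y0 z0]].

Lemma witness_diag y0 : witness (Estar C m (depth (val y0))) y0 y0.
Proof.
split=> [||y z|y z].
- exact/inT_Estar/depth_lt/valP.
- by move=> y z; rewrite entry_Estar ler0n.
- rewrite /key /rho => -[cy cz cx0y _ cyz _].
  have yz : y == z by rewrite eq_vertexE cyz cy cz setIid !eqxx.
  by rewrite entry_Estar yz /depth cy cx0y eqxx ltr0n.
rewrite entry_Estar; have [<-|] := eqVneq y z; last by rewrite eqxx.
have [dy|] := eqVneq (depth (val y)) (depth (val y0)); last by rewrite eqxx.
by rewrite /dominates -!setIA !setIid (depth_eq dy).2 (depth_eqC dy) !leqnn.
Qed.

Lemma witness_step y0 z0 w0 P : witness P w0 z0 ->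
  (forall y z, key y z = key y0 z0 ->
     exists2 w, adjb m (val y) (val w) & key w z = key w0 z0) ->
  (forall y z w, depth (val y) = depth (val y0) -> adjb m (val y) (val w) ->
     depth (val w) = depth (val w0) -> dominates w z w0 z0 -> dominates y z y0 z0) ->
  witness (Estar C m (depth (val y0)) *m (A1 C m *m P)) y0 z0.
Proof.
move=> [TP P_ge0 P_gt0 P_supp] key_adj dom_adj.
have term_ge0 y z u : 0 <= entry (A1 C m) y u * entry P u z.
  by rewrite mulr_ge0 ?entry_A1 ?ler0n.
split=> [||y z yz0|y z].
- exact/inT_mul/inT_mul/TP/inT_A1/inT_Estar/depth_lt/valP.
- move=> y z; rewrite entry_EstarM entry_mul mulr_ge0 ?ler0n //.
  by rewrite sumr_ge0 // => u _; apply: term_ge0.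
- have [w yw wz] := key_adj y z yz0.
  rewrite entry_EstarM (depth_key yz0) eqxx mul1r entry_mul (bigD1 w) //=.
  apply: ltr_wpDr; first by rewrite sumr_ge0 // => u _; apply: term_ge0.
  by rewrite entry_A1 yw mul1r P_gt0.
rewrite entry_EstarM entry_mul.
have [dy|] := eqVneq (depth (val y)) (depth (val y0)); last by rewrite mul0r eqxx.
rewrite mul1r => sum_neq0.
have [w] : exists w, entry (A1 C m) y w * entry P w z != 0.
  case: (pickP (fun w => entry (A1 C m) y w * entry P w z != 0)) => [w nz|all0].
    by exists w.
  by move: sum_neq0; rewrite big1 ?eqxx // => w _; apply/eqP/negbFE/all0.
rewrite mulf_eq0 negb_or entry_A1 pnatr_eq0 eqb0 negbK => /andP[yw /P_supp[dw dz dom]].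
by split=> //; apply: dom_adj yw dw dom.
Qed.

Lemma key_setU1 y z w e : val w = e |: val y -> e \notin val y -> e \in val z ->
  key w z = ((#|val y|.+1, #|val z|),
     ((e \in x0 m) + #|x0 m :&: val y|, #|x0 m :&: val z|, #|val y :&: val z|.+1,
      (e \in x0 m) + #|x0 m :&: val y :&: val z|))%N.
Proof.
move=> wE ey ez.
have cyz : #|(e |: val y) :&: val z| = #|val y :&: val z|.+1.
  by rewrite setIC card_setU1I // ez setIC.
have cx0yz :
    #|x0 m :&: (e |: val y) :&: val z| = ((e \in x0 m) + #|x0 m :&: val y :&: val z|)%N.
  by rewrite setIAC card_setU1I // inE ez andbT setIAC.
by rewrite /key /rho wE cardsU1 ey card_setU1I // cyz cx0yz.
Qed.

Lemma key_setD1 y z w e : val w = val y :\ e -> e \in val y -> e \notin val z ->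
  key w z = ((#|val y|.-1, #|val z|),
     (#|x0 m :&: val y| - (e \in x0 m), #|x0 m :&: val z|, #|val y :&: val z|,
      #|x0 m :&: val y :&: val z|))%N.
Proof.
move=> wE ey ez.
have cyz : #|(val y :\ e) :&: val z| = #|val y :&: val z|.
  by rewrite setIC [in RHS]setIC (card_setD1I (val z) ey) (negbTE ez).
have cx0yz : #|x0 m :&: (val y :\ e) :&: val z| = #|x0 m :&: val y :&: val z|.
  by rewrite setIAC [in RHS]setIAC (card_setD1I (x0 m :&: val z) ey) inE (negbTE ez) andbF.
by rewrite /key /rho wE (cardsD1 e (val y)) ey (card_setD1I (x0 m) ey) addKn cyz cx0yz.
Qed.

Lemma witness_up y0 z0 w0 e0 P : #|val y0| = m -> val w0 = e0 |: val y0 ->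
  e0 \notin val y0 -> e0 \in val z0 ->
  (e0 \in x0 m) = (#|x0 m :&: val y0 :&: val z0| < #|x0 m :&: val z0|)%N ->
  witness P w0 z0 -> witness (Estar C m (depth (val y0)) *m (A1 C m *m P)) y0 z0.
Proof.
move=> cy0 w0E e0y0 e0z0 e0x0 wP.
have lt0 : (#|val y0 :&: val z0| < #|val z0|)%N.
  apply/proper_card/properP; split; first exact: subsetIr.
  by exists e0; rewrite // inE (negbTE e0y0).
apply: witness_step wP _ _ => [y z|y z w dy yw dw].
  move=> yz0; have [cy ltyz] : #|val y| = m /\ (#|val y :&: val z| < #|val z|)%N.
    by move: yz0; rewrite /key /rho cy0 => -[-> -> _ _ -> _].
  have [e [ez ey ex0]] := ex_in_setD_pref (x0 m) ltyz.
  have inXw : inX m (e |: val y) by rewrite /inX cardsU1 ey cy eqxx orbT.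
  exists (Sub (e |: val y) inXw); first by rewrite /adjb properUr ?orbT // sub1set.
  rewrite (key_setU1 (w := Sub _ inXw) (erefl _) ey ez) (key_setU1 w0E) // ex0 e0x0.
  by move: yz0; rewrite /key /rho => -[-> -> -> -> -> ->].
have [cy cx0y] := depth_eq dy; have [cw cx0w] := depth_eq dw.
have syw : val y \subset val w.
  case/orP: yw => [/proper_sub //|/proper_card].
  by rewrite cw cy w0E cardsU1 e0y0 cy0; lia.
have cCw : #|~: x0 m :&: val w| = #|~: x0 m :&: (e0 |: val y0)| by rewrite -w0E (depth_eqC dw).
case/andP=> dom_in dom_out; rewrite w0E in cx0w dom_in dom_out.
by rewrite /dominates (leq_cardI_setU1 e0y0 e0z0 syw cx0w cx0y dom_in)
  (leq_cardI_setU1 e0y0 e0z0 syw cCw (depth_eqC dy) dom_out).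
Qed.

Lemma witness_down y0 z0 w0 e0 P : #|val y0| = m.+1 -> val w0 = val y0 :\ e0 ->
  e0 \in val y0 -> e0 \notin val z0 ->
  (e0 \in x0 m) = (#|x0 m :&: val y0 :&: val z0| < #|x0 m :&: val y0|)%N ->
  witness P w0 z0 -> witness (Estar C m (depth (val y0)) *m (A1 C m *m P)) y0 z0.
Proof.
move=> cy0 w0E e0y0 e0z0 e0x0 wP.
have lt0 : (#|val y0 :&: val z0| < #|val y0|)%N.
  apply/proper_card/properP; split; first exact: subsetIl.
  by exists e0; rewrite // inE (negbTE e0z0) andbF.
apply: witness_step wP _ _ => [y z|y z w dy yw dw].
  move=> yz0; have [cy ltyz] : #|val y| = m.+1 /\ (#|val y :&: val z| < #|val y|)%N.
    by move: yz0; rewrite /key /rho -cy0 => -[-> _ _ _ -> _].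
  rewrite setIC in ltyz; have [e [ey ez ex0]] := ex_in_setD_pref (x0 m) ltyz.
  have cyD : #|val y :\ e| = m by have := cardsD1 e (val y); rewrite ey cy; lia.
  have inXw : inX m (val y :\ e) by rewrite /inX cyD eqxx.
  exists (Sub (val y :\ e) inXw); first by rewrite /adjb properD1 ?orbT.
  rewrite (key_setD1 (w := Sub _ inXw) (erefl _) ey ez) (key_setD1 w0E) // ex0 e0x0.
  rewrite !(setIAC _ (val z)).
  by move: yz0; rewrite /key /rho => -[-> -> -> -> -> ->].
have [cy _] := depth_eq dy; have [cw _] := depth_eq dw.
have swy : val w \subset val y.
  case/orP: yw => [/proper_card|/proper_sub //].
  by rewrite cw cy w0E cy0; have := cardsD1 e0 (val y0); rewrite e0y0 cy0; lia.
case/andP=> dom_in dom_out; rewrite w0E in dom_in dom_out.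
by rewrite /dominates (leq_cardI_setD1 e0z0 swy dom_in) (leq_cardI_setD1 e0z0 swy dom_out).
Qed.

Lemma witness_exists y0 z0 : exists P, witness P y0 z0.
Proof.
have [n] := ubnP (#|val y0| - #|val y0 :&: val z0| + (#|val z0| - #|val y0 :&: val z0|))%N.
elim: n y0 z0 => // n IH y0 z0 lt_gap.
have [<-|] := eqVneq y0 z0; first by exists (Estar C m (depth (val y0))); apply: witness_diag.
have := subset_leq_card (subsetIl (val y0) (val z0)).
have := subset_leq_card (subsetIr (val y0) (val z0)).
rewrite eq_vertexE negb_and => le_z0 le_y0 neq.
have := cardXt z0; case: (cardXt y0) => cy0 cz0.
- have lt_z0 : (#|val y0 :&: val z0| < #|val z0|)%N by lia.
  have [e0 [e0z0 e0y0 e0x0]] := ex_in_setD_pref (x0 m) lt_z0.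
  have inXw0 : inX m (e0 |: val y0) by rewrite /inX cardsU1 e0y0 cy0 eqxx orbT.
  pose w0 : X := Sub _ inXw0; have w0E : val w0 = e0 |: val y0 by [].
  have [cw0 cw0z0] : #|val w0| = #|val y0|.+1 /\ #|val w0 :&: val z0| = #|val y0 :&: val z0|.+1.
    by have := key_setU1 w0E e0y0 e0z0; rewrite /key /rho => -[-> _ -> _].
  have [P wP] : exists P, witness P w0 z0 by apply: (IH w0 z0); lia.
  by exists (Estar C m (depth (val y0)) *m (A1 C m *m P)); apply: witness_up wP.
- have lt_y0 : (#|val z0 :&: val y0| < #|val y0|)%N by rewrite setIC; lia.
  have [e0 [e0y0 e0z0 e0x0]] := ex_in_setD_pref (x0 m) lt_y0; rewrite setIC in lt_y0.
  have cy0D : #|val y0 :\ e0| = m by have := cardsD1 e0 (val y0); rewrite e0y0 cy0; lia.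
  have inXw0 : inX m (val y0 :\ e0) by rewrite /inX cy0D eqxx.
  pose w0 : X := Sub _ inXw0; have w0E : val w0 = val y0 :\ e0 by [].
  have [cw0 cw0z0] : #|val w0| = #|val y0|.-1 /\ #|val w0 :&: val z0| = #|val y0 :&: val z0|.
    by have := key_setD1 w0E e0y0 e0z0; rewrite /key /rho => -[-> _ -> _].
  have [P wP] : exists P, witness P w0 z0 by apply: (IH w0 z0); lia.
  exists (Estar C m (depth (val y0)) *m (A1 C m *m P)); apply: witness_down wP => //.
  by rewrite e0x0 setIAC.
Qed.

Lemma inT_of_key_invariant M : key_invariant M ->
  (forall y z, entry M y z != 0 -> inT C m (orbit_mx C m (key y z))) -> inT C m M.
Proof.
move=> iM orbitT; rewrite (key_invariant_decomp iM).
apply: (big_ind (inT C m)); [exact: inT0 | exact: inTD | move=> k _].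
rewrite /key_coef; case: pickP => [[y z] /= /eqP <- | _]; last by rewrite scale0r; apply: inT0.
have [->|nz] := eqVneq (entry M y z) 0; first by rewrite scale0r; apply: inT0.
exact/inTZ/orbitT.
Qed.

(* Subtract from a witness its orbit part: what remains lives on orbits with
   strictly larger [|y :&: z|], which are in [T] by induction. *)
Lemma inT_orbit_mx y0 z0 : inT C m (orbit_mx C m (key y0 z0)).
Proof.
have [d] := ubnP (2 * m + 2 - #|val y0 :&: val z0|); elim: d y0 z0 => // d IH y0 z0 lt_d.
have [P [TP _ P_gt0 P_supp]] := witness_exists y0 z0.
set c := entry P y0 z0; have c_gt0 : 0 < c by apply: P_gt0.
have TR : inT C m (P - c *: orbit_mx C m (key y0 z0)).
  apply: inT_of_key_invariant => [|y z].
    rewrite -scaleNr; apply: key_invariantD (key_invariant_inT TP) _.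
    exact/key_invariantZ/key_invariant_orbit_mx.
  rewrite entryD entryN entryZ entry_orbit_mx.
  have [yz0|yz0] := eqVneq (key y z) (key y0 z0).
    by rewrite mulr1 (key_invariant_inT TP yz0) subrr eqxx.
  rewrite mulr0 subr0 => /P_supp[dy dz dom].
  have [lt_yz|le_yz] := ltnP #|val y0 :&: val z0| #|val y :&: val z|.
    by apply: IH; have := card_set_lt (val y :&: val z); lia.
  by rewrite (key_dominated dy dz dom le_yz) eqxx in yz0.
have -> : orbit_mx C m (key y0 z0) = c^-1 *: (P - (P - c *: orbit_mx C m (key y0 z0))).
  by rewrite opprB addrC subrK scalerA mulVf ?scale1r // lt0r_neq0.
exact/inTZ/inTB.
Qed.

End Generation.

Lemma inT_span (C : numClosedFieldType) m (s : seq 'M[C]_(#|Xt m|)) :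
  {in s, forall M, inT C m M} -> forall M, M \in <<s>>%VS -> inT C m M.
Proof.
move=> sT M /(coord_span (X := in_tuple s)) ->; apply: inT_sum => i.
exact/inTZ/sT/mem_nth.
Qed.

Unset Implicit Arguments.

Theorem corollary4p12 (C : numClosedFieldType) (m : nat) :
  (3 <= m)%N ->
  free (claimed_basis C m) /\
  (forall M : 'M[C]_(#|Xt m|), inT C m M <-> M \in <<claimed_basis C m>>%VS).
Proof.
move=> _; rewrite claimed_basisE; split.
  exact: free_orbit_mx (@uniq_basis_keys m) (@basis_keysP m).
move=> M; split; first by move/key_invariant_inT/key_invariant_span.
apply: inT_span => _ /mapP[k /basis_keysP[y [z <-]] ->].
exact: inT_orbit_mx.
Qed.
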